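(* For the Proximal Bundle Method, suppose iteration $k$ is a descent step and iterations $k+1,\dots,k+T$ are all null steps, and let $G=\sup\{\|g_{t+1}\|: k\le t\le k+T\}>0$. For $k<t\le k+T+1$ define the model proximal gap $\widetilde\Delta_t:=f(x_{k+1})-\left(f_t(z_{t+1})+\frac{\rho_t}{2}\|z_{t+1}-x_{k+1}\|^2\right)$. Then for every $k<t\le k+T$, $$\widetilde\Delta_{t+1}\le\widetilde\Delta_t-\frac{(1-\beta)^2\rho_{k+1}\widetilde\Delta_t^2}{8G^2}.$$
   Context: Throughout, $f:\mathbb{R}^d\to\mathbb{R}$ is a proper closed convex function attaining its minimum $f^*=\inf f$ on the nonempty set $X^*=\{x: f(x)=f^*\}$; $\partial f(x)$ is the convex subdifferential. A subgradient oracle returns, for any $x$, the value $f(x)$ and some $g(x)\in\partial f(x)$. Proximal Bundle Method: fix $\beta\in(0,1)$, $x_0=z_0\in\mathbb{R}^d$, $g_0=g(x_0)$, and the initial model $f_0(x)=f(x_0)+\langle g_0,x-x_0\rangle$. At iteration $k\ge0$, given a convex model $f_k:\mathbb{R}^d\to\mathbb{R}$ and stepsize $\rho_k>0$, compute $z_{k+1}=\operatorname{argmin}_z f_k(z)+\frac{\rho_k}{2}\|z-x_k\|^2$. If $\beta(f(x_k)-f_k(z_{k+1}))\le f(x_k)-f(z_{k+1})$, iteration $k$ is a descent step and $x_{k+1}=z_{k+1}$; otherwise it is a null step and $x_{k+1}=x_k$. Then a new convex model $f_{k+1}$ and stepsize $\rho_{k+1}$ are chosen satisfying, with $g_{k+1}=g(z_{k+1})$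 and $s_{k+1}=\rho_k(x_k-z_{k+1})$: (1) $f_{k+1}(x)\le f(x)$ for all $x$; (2) $f_{k+1}(x)\ge f(z_{k+1})+\langle g_{k+1},x-z_{k+1}\rangle$ for all $x$; (3) if iteration $k$ was a null step, $f_{k+1}(x)\ge f_k(z_{k+1})+\langle s_{k+1},x-z_{k+1}\rangle$ for all $x$; (4) if iteration $k$ was a null step, $\rho_{k+1}\ge\rho_k$. *)

From HB Require Import structures.
From mathcomp Require Import all_boot all_order all_algebra.
From mathcomp Require Import reals.
Set Implicit Arguments. Unset Strict Implicit. Unset Printing Implicit Defensive.
Import Order.TTheory GRing.Theory Num.Theory.
Local Open Scope ring_scope.

Section PBM.
Variables (R : realType) (d : nat).
Notation V := 'rV[R]_d.

Definition dotv (u v : V) : R := \sum_(i < d) u ord0 i * v ord0 i.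
Definition normv (u : V) : R := Num.sqrt (dotv u u).

Definition convex_fun (h : V -> R) : Prop :=
  forall (x y : V) (t : R), 0 <= t -> t <= 1 ->
    h ((1 - t) *: x + t *: y) <= (1 - t) * h x + t * h y.

Definition is_subgrad (h : V -> R) (x s : V) : Prop :=
  forall y, h x + dotv s (y - x) <= h y.

Definition descent_step (f : V -> R) (beta : R) (x z : nat -> V)
  (model : nat -> V -> R) (k : nat) : Prop :=
  beta * (f (x k) - model k (z k.+1)) <= f (x k) - f (z k.+1).

(* (x,z,model,rho) is a run of the Proximal Bundle Method on f with
   parameter beta and subgradient oracle gor; g_k = gor (z_k), and
   g_0 = gor (x_0) since z_0 = x_0. *)
Definition is_PBM_run (f : V -> R) (gor : V -> V) (beta : R)
  (x z : nat -> V) (model : nat -> V -> R) (rho : nat -> R) : Prop :=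
  [/\ 0 < beta /\ beta < 1,
      x 0%N = z 0%N /\
      (forall y, model 0%N y = f (x 0%N) + dotv (gor (x 0%N)) (y - x 0%N)),
      (forall k, convex_fun (model k) /\ 0 < rho k),
      (forall k y, model k (z k.+1) + rho k / 2 * normv (z k.+1 - x k) ^+ 2
                   <= model k y + rho k / 2 * normv (y - x k) ^+ 2) /\
      (forall k, (descent_step f beta x z model k -> x k.+1 = z k.+1) /\
                 (~ descent_step f beta x z model k -> x k.+1 = x k)) &
      (forall k y,
        [/\ model k.+1 y <= f y,
            f (z k.+1) + dotv (gor (z k.+1)) (y - z k.+1) <= model k.+1 y,
            ~ descent_step f beta x z model k ->
              model k (z k.+1) + dotv (rho k *: (x k - z k.+1)) (y - z k.+1)
                <= model k.+1 y &
            ~ descent_step f beta x z model k -> rho k <= rho k.+1])].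

Definition model_gap (f : V -> R) (x z : nat -> V) (model : nat -> V -> R)
  (rho : nat -> R) (k t : nat) : R :=
  f (x k.+1) - (model t (z t.+1) + rho t / 2 * normv (z t.+1 - x k.+1) ^+ 2).

End PBM.

From HB Require Import structures.
From mathcomp Require Import all_boot all_order all_algebra.
From mathcomp Require Import reals.
From mathcomp Require Import ring lra zify.
Import Order.TTheory GRing.Theory Num.Theory.
Local Open Scope ring_scope.

(* Let x_{k+1} be the stability center fixed by the descent
   step k, and write P_s := f_s(z_{s+1}) + rho_s/2 |z_{s+1} - x_{k+1}|^2, so
   that the model proximal gap is f(x_{k+1}) - P_s.  During the null steps:
   - the proximal subproblem is strongly convex, so P_s + rho_s/2 |y-z_{s+1}|^2
     lies below the proximal objective at every y (quadratic growth);
   - the new model dominates every convex combination of the linearization cut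
     at z_{s+1} and the aggregate cut; completing the square gives, for all
     theta in [0,1], the gain P_{s+1} - P_s >= theta*(f-f_s)(z_{s+1}) -
     theta^2 |v_s|^2 / (2 rho_s), with v_s the difference of the two slopes
     (the "slope gap");
   - the failed descent test, the bound |g| <= G, and the monotonicity of P_s
     (the case theta = 0) bound (f-f_s)(z_{s+1}) below and |v_s|^2 above in
     terms of the gap.
   A one-dimensional optimization over theta then yields the theorem. *)

Set Implicit Arguments. Unset Strict Implicit.

Section InnerProduct.
Variables (R : realType) (d : nat).
Implicit Types (u v w : 'rV[R]_d) (a : R).

Lemma dotvC u v : dotv u v = dotv v u.
Proof. by apply: eq_bigr => i _; rewrite mulrC. Qed.

Lemma dotvDl u v w : dotv (u + v) w = dotv u w + dotv v w.
Proof. by rewrite /dotv -big_split; apply: eq_bigr => i _; rewrite mxE mulrDl. Qed.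

Lemma dotvDr u v w : dotv w (u + v) = dotv w u + dotv w v.
Proof. by rewrite dotvC dotvDl !(dotvC w). Qed.

Lemma dotvZl a u w : dotv (a *: u) w = a * dotv u w.
Proof. by rewrite /dotv mulr_sumr; apply: eq_bigr => i _; rewrite mxE mulrA. Qed.

Lemma dotvZr a u w : dotv w (a *: u) = a * dotv w u.
Proof. by rewrite dotvC dotvZl dotvC. Qed.

Lemma dotvNl u w : dotv (- u) w = - dotv u w.
Proof. by rewrite -scaleN1r dotvZl mulN1r. Qed.

Lemma dotvNr u w : dotv w (- u) = - dotv w u.
Proof. by rewrite dotvC dotvNl dotvC. Qed.

Lemma dotv0 : dotv (0 : 'rV[R]_d) 0 = 0.
Proof. by rewrite /dotv big1 // => i _; rewrite mxE mul0r. Qed.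

Lemma dotv_ge0 u : 0 <= dotv u u.
Proof. by apply: sumr_ge0 => i _; rewrite -expr2 sqr_ge0. Qed.

Lemma normv2 u : normv u ^+ 2 = dotv u u.
Proof. by rewrite sqr_sqrtr // dotv_ge0. Qed.

Lemma dotv_subC u w : dotv (u - w) (u - w) = dotv (w - u) (w - u).
Proof. by rewrite -opprB dotvNl dotvNr opprK. Qed.

Lemma dotv_sub_le u w : dotv (u - w) (u - w) <= 2 * dotv u u + 2 * dotv w w.
Proof.
have := dotv_ge0 (u + w).
by rewrite !(dotvDl, dotvDr, dotvNl, dotvNr) (dotvC w u); lra.
Qed.

Lemma dotv_le_sqr u (G : R) : normv u <= G -> dotv u u <= G ^+ 2.
Proof.
move=> uG; rewrite -normv2.
have : 0 <= normv u by exact: sqrtr_ge0.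
nra.
Qed.

(* Completing the square: th <v, a> + r/2 |a|^2 >= - th^2 |v|^2 / (2 r). *)
Lemma complete_square v w (r th : R) : 0 < r ->
  - (th ^+ 2 * dotv v v / (2 * r)) <= th * dotv v w + r / 2 * dotv w w.
Proof.
move=> r0; have := dotv_ge0 (r *: w + th *: v).
rewrite !(dotvDl, dotvDr, dotvZl, dotvZr) (dotvC w v).
set p := dotv w w; set q := dotv v w; set n := dotv v v => sq.
have -> : - (th ^+ 2 * n / (2 * r)) = - (th ^+ 2 * n) / (2 * r) by rewrite mulNr.
rewrite ler_pdivrMr ?mulr_gt0 //; nra.
Qed.

End InnerProduct.

(* If (1 - l) b <= a for every l in (0, 1], then b <= a (letting l -> 0). *)
Lemma le_of_interpolation (R : realType) (a b : R) : 0 <= b ->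
  (forall l, 0 < l -> l <= 1 -> (1 - l) * b <= a) -> b <= a.
Proof.
move=> b0 Hl; rewrite leNgt; apply/negP => ab.
have a0 : 0 <= a by have := Hl 1 ltr01 (lexx _); rewrite subrr mul0r.
have bpos : 0 < b by lra.
have l0 : 0 < (b - a) / (2 * b) by apply: divr_gt0; lra.
have l1 : (b - a) / (2 * b) <= 1 by rewrite ler_pdivrMr; lra.
have := Hl _ l0 l1.
have -> : (1 - (b - a) / (2 * b)) * b = (a + b) / 2 by field; rewrite gt_eqF.
lra.
Qed.

Section ProximalPoint.
Variables (R : realType) (d : nat).
Implicit Types (u v w : 'rV[R]_d).

Lemma prox_quadratic_growth (m : 'rV[R]_d -> R) (r : R) (xb zz : 'rV[R]_d) :
  convex_fun m -> 0 < r ->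
  (forall y, m zz + r / 2 * normv (zz - xb) ^+ 2
               <= m y + r / 2 * normv (y - xb) ^+ 2) ->
  forall y, m zz + r / 2 * dotv (zz - xb) (zz - xb)
              + r / 2 * dotv (y - zz) (y - zz)
            <= m y + r / 2 * dotv (y - xb) (y - xb).
Proof.
move=> cvx r0 zz_min y.
set a := zz - xb; set b := y - xb.
have -> : y - zz = b - a by apply/rowP => i; rewrite !mxE; ring.
have on_segment l : (1 - l) *: zz + l *: y - xb = (1 - l) *: a + l *: b.
  by apply/rowP => i; rewrite !mxE; ring.
rewrite -/a in zz_min; clearbody a b.
suff : r / 2 * dotv (b - a) (b - a)
         <= m y + r / 2 * dotv b b - (m zz + r / 2 * dotv a a) by lra.
apply: le_of_interpolation.
  by apply: mulr_ge0; [lra | exact: dotv_ge0].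
move=> l l0 l1.
have := zz_min ((1 - l) *: zz + l *: y); rewrite on_segment.
have := cvx zz y l (ltW l0) l1.
rewrite !normv2 !(dotvDl, dotvDr, dotvZl, dotvZr, dotvNl, dotvNr) (dotvC b a).
set A := dotv a a; set B := dotv b b; set D := dotv a b.
set mz := m zz; set my := m y; set ml := m _ => cvx_l min_l.
suff : l * ((1 - l) * (r / 2 * (B - D - (D - A))))
         <= l * (my + r / 2 * B - (mz + r / 2 * A)).
  by rewrite ler_pM2l //; lra.
nra.
Qed.

(* Two cuts at zz, with slopes g (the linearization, value fz) and
   r (xb - zz) (the aggregate, value mz), both below mw at w, dominate their
   theta-combination; expanding |w - xb|^2 around zz gives the lower bound on
   the next proximal objective used for every null step. *)
Lemma two_cut_lower_bound (fz mz mw r r' th : R) (g xb zz w : 'rV[R]_d) :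
  0 < r -> r <= r' -> 0 <= th -> th <= 1 ->
  fz + dotv g (w - zz) <= mw ->
  mz + dotv (r *: (xb - zz)) (w - zz) <= mw ->
  mz + r / 2 * dotv (zz - xb) (zz - xb) + th * (fz - mz)
    + (th * dotv (g - r *: (xb - zz)) (w - zz) + r / 2 * dotv (w - zz) (w - zz))
  <= mw + r' / 2 * dotv (w - xb) (w - xb).
Proof.
move=> r0 rr' th0 th1 lin_cut agg_cut.
have -> : w - xb = (w - zz) + (zz - xb) by apply/rowP => i; rewrite !mxE; ring.
have -> : xb - zz = - (zz - xb) by apply/rowP => i; rewrite !mxE; ring.
rewrite -[xb - zz]opprB in agg_cut.
move: lin_cut agg_cut (dotv_ge0 ((w - zz) + (zz - xb))).
move: (w - zz) (zz - xb) => a b.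
rewrite !(dotvDl, dotvDr, dotvZl, dotvZr, dotvNl, dotvNr, opprK) !(dotvC b a).
set A := dotv a a; set B := dotv b b; set D := dotv a b; set q := dotv g a.
move=> lin_cut agg_cut nn.
have r_le : r / 2 * (A + D + (D + B)) <= r' / 2 * (A + D + (D + B)).
  by apply: ler_wpM2r => //; lra.
have : th * (fz + q) <= th * mw by apply: ler_wpM2l.
have : (1 - th) * (mz + r * - D) <= (1 - th) * mw by apply: ler_wpM2l; lra.
lra.
Qed.

End ProximalPoint.

Section ScalarGain.
Variable R : realType.

Lemma concave_quadratic_max (e K r gain : R) : 0 <= e -> 0 < K -> 0 < r ->
  (forall th, 0 <= th -> th <= 1 -> th * e - th ^+ 2 * K / (2 * r) <= gain) ->
  Num.min (r * e ^+ 2 / (2 * K)) (e / 2) <= gain.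
Proof.
move=> e0 K0 r0 Hgain; rewrite ge_min; apply/orP.
have [small|big] := lerP (r * e) K.
- left; pose th := r * e / K.
  have th0 : 0 <= th by apply: divr_ge0; [apply: mulr_ge0|]; lra.
  have th1 : th <= 1 by rewrite /th ler_pdivrMr // mul1r.
  have -> : r * e ^+ 2 / (2 * K) = th * e - th ^+ 2 * K / (2 * r).
    by rewrite /th; field; rewrite (gt_eqF K0) (gt_eqF r0).
  exact: Hgain.
- right; apply: le_trans (Hgain 1 ler01 (lexx _)).
  have : K / (2 * r) <= e / 2.
    rewrite ler_pdivrMr ?mulr_gt0 //.
    have -> : e / 2 * (2 * r) = r * e by field.
    exact: ltW.
  by rewrite expr1n !mul1r; lra.
Qed.

(* The scalar core of the theorem: with D the current gap, dl >= (1-bt) D the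
   model error at the trial point, C the squared slope difference and
   the gain bounded below as in [two_cut_lower_bound], the gain is at least
   (1-bt)^2 r1 D^2 / (8 G^2). *)
Lemma null_step_gain (D dl bt r1 rt G C gain : R) :
  0 <= bt -> bt < 1 -> 0 < r1 -> r1 <= rt -> 0 < G -> 0 <= D ->
  (1 - bt) * D <= dl -> D <= G ^+ 2 / (2 * r1) ->
  C <= 2 * G ^+ 2 + 4 * rt * D ->
  (forall th, 0 <= th -> th <= 1 -> th * dl - th ^+ 2 * C / (2 * rt) <= gain) ->
  (1 - bt) ^+ 2 * r1 * D ^+ 2 / (8 * G ^+ 2) <= gain.
Proof.
move=> b0 b1 r10 r1t G0 D0 hdl hD hC Hgain.
have rt0 : 0 < rt by lra.
have G20 : 0 < G ^+ 2 by rewrite exprn_gt0.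
have hD' : 2 * r1 * D <= G ^+ 2 by rewrite -ler_pdivlMl ?mulr_gt0 // mulrC.
set K := 4 * rt * G ^+ 2 / r1; set e := (1 - bt) * D.
have K0 : 0 < K by rewrite /K divr_gt0 // !mulr_gt0.
have e0 : 0 <= e by rewrite /e mulr_ge0 //; lra.
have CK : C <= K.
  rewrite /K ler_pdivlMr //.
  have : C * r1 <= (2 * G ^+ 2 + 4 * rt * D) * r1 by rewrite ler_pM2r.
  nra.
apply: le_trans (concave_quadratic_max e0 K0 rt0 _).
- rewrite le_min; apply/andP; split.
    rewrite le_eqVlt; apply/orP; left; apply/eqP; rewrite /e /K.
    by field; rewrite (gt_eqF r10) (gt_eqF G0) (gt_eqF rt0).
  rewrite ler_pdivrMr ?mulr_gt0 //.
  have : e * ((1 - bt) * r1 * D) <= e * (G ^+ 2 / 2).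
    by apply: ler_wpM2l => //; nra.
  have : 0 <= e * G ^+ 2 by rewrite mulr_ge0 // ltW.
  have -> : (1 - bt) ^+ 2 * r1 * D ^+ 2 = e * ((1 - bt) * r1 * D) by rewrite /e; ring.
  lra.
- move=> th th0 th1; apply: le_trans (Hgain th th0 th1).
  have : th * e <= th * dl by rewrite ler_wpM2l.
  have : th ^+ 2 * C / (2 * rt) <= th ^+ 2 * K / (2 * rt).
    apply: ler_wpM2r; first by rewrite invr_ge0; lra.
    by apply: ler_wpM2l; [exact: sqr_ge0 |].
  lra.
Qed.

End ScalarGain.

Section NullStreak.
Variables (R : realType) (d : nat) (f : 'rV[R]_d -> R) (gor : 'rV[R]_d -> 'rV[R]_d).
Variables (beta : R) (x z : nat -> 'rV[R]_d) (model : nat -> 'rV[R]_d -> R).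
Variables (rho : nat -> R) (k T : nat).

Hypothesis run : is_PBM_run f gor beta x z model rho.
Hypothesis serious : descent_step f beta x z model k.
Hypothesis nulls :
  forall t, (k < t <= k + T)%N -> ~ descent_step f beta x z model t.

Local Notation xb := (x k.+1).

Definition prox_value (s : nat) : R :=
  model s (z s.+1) + rho s / 2 * dotv (z s.+1 - xb) (z s.+1 - xb).

Definition streak_grad_bound : R :=
  \big[Num.max/0]_(j < T.+1) normv (gor (z (k + j).+1)).

Local Notation G := streak_grad_bound.

Definition slope_gap (s : nat) : 'rV[R]_d := gor (z s.+1) - rho s *: (xb - z s.+1).

Lemma model_gapE s : model_gap f x z model rho k s = f xb - prox_value s.
Proof. by rewrite /model_gap normv2. Qed.

Lemma center_is_trial_point : xb = z k.+1.
Proof. by have [_ _ _ [_ Hstep] _] := run; exact: (Hstep k).1. Qed.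

Lemma center_fixed s : (k < s)%N -> (s <= k + T + 1)%N -> x s = xb.
Proof.
have [_ _ _ [_ Hstep] _] := run.
elim: s => [|s IH] // ks sT; have [->|ne] := eqVneq s k; first by [].
rewrite ((Hstep s).2 (nulls _)); [apply: IH; lia | apply/andP; lia].
Qed.

Lemma stepsize_ge_first s : (k < s)%N -> (s <= k + T + 1)%N -> rho k.+1 <= rho s.
Proof.
have [_ _ _ _ Hmod] := run.
elim: s => [|s IH] // ks sT; have [->|ne] := eqVneq s k; first by [].
apply: le_trans (IH _ _) _; try lia.
by have [_ _ _ grow] := Hmod s 0; apply: grow; apply: nulls; apply/andP; lia.
Qed.

Lemma streak_growth s : (k < s)%N -> (s <= k + T)%N -> forall y,
  prox_value s + rho s / 2 * dotv (y - z s.+1) (y - z s.+1)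
  <= model s y + rho s / 2 * dotv (y - xb) (y - xb).
Proof.
move=> ks sT; have [_ _ Hcr [Hmin _] _] := run.
apply: prox_quadratic_growth (Hcr s).1 (Hcr s).2 _ => y.
by rewrite -(center_fixed ks) ?Hmin //; lia.
Qed.

Lemma prox_value_gain s th : (k < s)%N -> (s <= k + T)%N -> 0 <= th -> th <= 1 ->
  th * (f (z s.+1) - model s (z s.+1))
    - th ^+ 2 * dotv (slope_gap s) (slope_gap s) / (2 * rho s)
  <= prox_value s.+1 - prox_value s.
Proof.
move=> ks sT th0 th1; have [_ _ Hcr _ Hmod] := run.
have ns : ~ descent_step f beta x z model s by apply: nulls; apply/andP; lia.
have [_ lin_cut agg_cut grow] := Hmod s (z s.+2).
have := agg_cut ns; rewrite (center_fixed ks) ?addn1 ?leqW // => agg_cut'.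
have := two_cut_lower_bound (Hcr s).2 (grow ns) th0 th1 lin_cut agg_cut'.
have := complete_square (slope_gap s) (z s.+2 - z s.+1) th (Hcr s).2.
rewrite /prox_value; lra.
Qed.

(* The proximal value increases along the streak (the case th = 0). *)
Lemma prox_value_mono s : (k < s)%N -> (s <= k + T)%N ->
  prox_value k.+1 <= prox_value s.
Proof.
elim: s => [|s IH] // ks sT; have [->|ne] := eqVneq s k; first by [].
apply: le_trans (IH _ _) _; try lia.
have ks' : (k < s)%N by lia.
have sT' : (s <= k + T)%N by lia.
have := prox_value_gain ks' sT' (lexx 0) ler01.
by rewrite !mul0r expr0n /= !mul0r; lra.
Qed.

Lemma prox_value_first :
  f xb - dotv (gor xb) (gor xb) / (2 * rho k.+1) <= prox_value k.+1.
Proof.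
have [_ _ Hcr _ Hmod] := run.
have [_ lin_cut _ _] := Hmod k (z k.+2); rewrite -center_is_trial_point in lin_cut.
have := complete_square (gor xb) (z k.+2 - xb) 1 (Hcr k.+1).2.
have := dotv_ge0 (z k.+2 - xb).
by rewrite /prox_value expr1n !mul1r; lra.
Qed.

Lemma streak_grad_le s : (k <= s)%N -> (s <= k + T)%N ->
  dotv (gor (z s.+1)) (gor (z s.+1)) <= G ^+ 2.
Proof.
move=> ks sT; apply: dotv_le_sqr.
have sk : (s - k < T.+1)%N by lia.
have := le_bigmax 0 (fun j : 'I_T.+1 => normv (gor (z (k + j).+1))) (Ordinal sk).
by rewrite /= subnKC.
Qed.

Section AtStep.
Variable t : nat.
Hypotheses (kt : (k < t)%N) (tT : (t <= k + T)%N).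

Let n := dotv (z t.+1 - xb) (z t.+1 - xb).

Lemma gap_ge_distance : rho t / 2 * n <= f xb - prox_value t.
Proof.
have [_ _ _ _ Hmod] := run.
have model_le_f : model t xb <= f xb.
  by have [below _ _ _] := Hmod t.-1 xb; rewrite prednK in below => //; lia.
have := streak_growth kt tT xb.
by rewrite subrr dotv0 mulr0 addr0 dotv_subC /prox_value -/n; lra.
Qed.

(* The failed descent test: the model error at z_{t+1} is at least
   (1 - beta) times the gap. *)
Lemma gap_le_model_error :
  (1 - beta) * (f xb - prox_value t) <= f (z t.+1) - model t (z t.+1).
Proof.
have [[_ b1] _ Hcr _ _] := run.
have failed : f xb - f (z t.+1) < beta * (f xb - model t (z t.+1)).
  by rewrite ltNge -(center_fixed kt) ?addn1 ?leqW //; apply/negP/nulls/andP.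
have : 0 <= (1 - beta) * (rho t / 2 * n).
  by apply: mulr_ge0; [lra | apply: mulr_ge0; [have := (Hcr t).2; lra | exact: dotv_ge0]].
have -> : (1 - beta) * (f xb - prox_value t)
  = (1 - beta) * (f xb - model t (z t.+1)) - (1 - beta) * (rho t / 2 * n).
  by rewrite /prox_value -/n; ring.
lra.
Qed.

Lemma gap_le_grad_bound : f xb - prox_value t <= G ^+ 2 / (2 * rho k.+1).
Proof.
have [_ _ Hcr _ _] := run.
have := streak_grad_le (leqnn k) (leq_addr T k); rewrite -center_is_trial_point.
move=> gxb; have : dotv (gor xb) (gor xb) / (2 * rho k.+1) <= G ^+ 2 / (2 * rho k.+1).
  by apply: ler_wpM2r => //; rewrite invr_ge0; have := (Hcr k.+1).2; lra.
have := prox_value_mono kt tT; have := prox_value_first; lra.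
Qed.

Lemma slope_gap_le_grad_bound :
  dotv (slope_gap t) (slope_gap t) <= 2 * G ^+ 2 + 4 * rho t * (f xb - prox_value t).
Proof.
have [_ _ Hcr _ _] := run; have rt0 := (Hcr t).2.
apply: le_trans (dotv_sub_le _ _) _.
rewrite dotvZl dotvZr dotv_subC -/n.
have : rho t * (rho t * n) <= rho t * (2 * (f xb - prox_value t)).
  by apply: ler_wpM2l; [lra | have := gap_ge_distance; lra].
have := streak_grad_le (ltnW kt) tT; lra.
Qed.

Lemma gap_decrease : 0 < G ->
  model_gap f x z model rho k t.+1 <=
    model_gap f x z model rho k t
    - (1 - beta) ^+ 2 * rho k.+1 * (model_gap f x z model rho k t) ^+ 2
      / (8 * G ^+ 2).
Proof.
move=> G0; have [[b0 b1] _ Hcr _ _] := run.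
rewrite !model_gapE.
suff : (1 - beta) ^+ 2 * rho k.+1 * (f xb - prox_value t) ^+ 2 / (8 * G ^+ 2)
         <= prox_value t.+1 - prox_value t by lra.
apply: null_step_gain (ltW b0) b1 (Hcr k.+1).2 _ G0 _ gap_le_model_error
  gap_le_grad_bound slope_gap_le_grad_bound (fun th => prox_value_gain kt tT).
- by apply: stepsize_ge_first => //; rewrite addn1 leqW.
- have : 0 <= rho t / 2 * n by apply: mulr_ge0; [have := (Hcr t).2; lra | exact: dotv_ge0].
  have := gap_ge_distance; lra.
Qed.

End AtStep.
End NullStreak.

Unset Implicit Arguments. Set Strict Implicit.

Theorem mainTheorem10 (R : realType) (d : nat) (f : 'rV[R]_d -> R)
  (gor : 'rV[R]_d -> 'rV[R]_d) (beta : R)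
  (x z : nat -> 'rV[R]_d) (model : nat -> 'rV[R]_d -> R) (rho : nat -> R)
  (k T : nat) :
  convex_fun f ->
  (exists xs : 'rV[R]_d, forall y, f xs <= f y) ->
  (forall y, is_subgrad f y (gor y)) ->
  is_PBM_run f gor beta x z model rho ->
  descent_step f beta x z model k ->
  (forall t, (k < t <= k + T)%N -> ~ descent_step f beta x z model t) ->
  let G := \big[Num.max/0]_(j < T.+1) normv (gor (z (k + j).+1)) in
  0 < G ->
  forall t, (k < t <= k + T)%N ->
    model_gap f x z model rho k t.+1 <=
      model_gap f x z model rho k t
      - (1 - beta) ^+ 2 * rho k.+1 * (model_gap f x z model rho k t) ^+ 2
        / (8 * G ^+ 2).
Proof.
move=> _ _ _ run serious nulls G G0 t /andP[kt tT].
exact (gap_decrease run serious nulls kt tT G0).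
Qed.
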